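(* Let $B_3$ be the braid group on three strands with standard generators $\sigma_1,\sigma_2$ (relation $\sigma_1\sigma_2\sigma_1=\sigma_2\sigma_1\sigma_2$). There is no element $a\in B_3$ satisfying $a^2=(\sigma_1\sigma_2)^{-1}$. Consequently none of the objects $\hat\alpha$, $\hat\beta=\sigma_1^{-1}\hat\alpha\sigma_1$, $|\hat\omega=\hat\alpha\sigma_1$, $\hat\omega|=\sigma_2\hat\alpha$, where $\hat\alpha$ is required to satisfy $\hat\alpha^2=(\sigma_1\sigma_2)^{-1}$, can be represented by a braid on three strands.
   Context: The objects $\hat\alpha,\hat\beta,|\hat\omega,\hat\omega|$ are formal markers inserted on the three strands of a leg to represent edge twists that are incompatible with the states of the two end vertices of the edge; consistency with compatible twists forces the relations $\hat\alpha^2=\sigma_2^{-1}\sigma_1^{-1}=(\sigma_1\sigma_2)^{-1}$, $\hat\beta=\sigma_1^{-1}\hat\alpha\sigma_1=\sigma_2\hat\alpha\sigma_2^{-1}$, $|\hat\omega=\hat\alpha\sigma_1$, $\hat\omega|=\sigma_2\hat\alpha$. Braid words are read top to bottom. *)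

(* The braid group B_3 given by its standard presentation
   < sigma_1, sigma_2 | sigma_1 sigma_2 sigma_1 = sigma_2 sigma_1 sigma_2 >,
   realised as words in the generators and their inverses modulo the
   congruence generated by free cancellation and the braid relation.
   Words are read left to right (= top to bottom); product is concatenation. *)
From Stdlib Require Import List.
Import ListNotations.

Inductive gen : Type := s1 | s2.

(* a letter: a generator together with a flag, [true] meaning its inverse *)
Definition letter : Type := (gen * bool)%type.
Definition word : Type := list letter.

Definition linv (x : letter) : letter := (fst x, negb (snd x)).

Definition wmul (u v : word) : word := u ++ v.
Definition winv (u : word) : word := rev (map linv u).
Definition wone : word := [].

Definition sigma1 : word := [(s1, false)].
Definition sigma2 : word := [(s2, false)].

Inductive beq : word -> word -> Prop :=
| beq_refl (w : word) : beq w w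
| beq_sym (u v : word) : beq u v -> beq v u
| beq_trans (u v w : word) : beq u v -> beq v w -> beq u w
| beq_cancel (u v : word) (x : letter) :
    beq (u ++ x :: linv x :: v) (u ++ v)
| beq_braid (u v : word) :
    beq (u ++ [(s1,false); (s2,false); (s1,false)] ++ v)
        (u ++ [(s2,false); (s1,false); (s2,false)] ++ v).

(* B_3 maps onto S_3, viewed as the group of affine maps y |-> ±y + t of
   Z/3Z, by letting sigma_1 act as y |-> -y and sigma_2 as y |-> 1 - y; it
   also maps onto Z by the exponent sum.  If a^2 = (sigma_1 sigma_2)^-1, the
   exponent sum of a is -1, so a has odd length and acts as a reflection
   y |-> -y + t, whose square is the identity; but (sigma_1 sigma_2)^-1 acts
   as the translation y |-> y + 1.  Each of the other three objects would be
   a braid whose square is (sigma_1 sigma_2)^-1 as well. *)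
From Stdlib Require Import List ZArith Lia.
Open Scope Z_scope.

Definition offset (g : gen) : Z := match g with s1 => 0 | s2 => 1 end.

Definition act (w : word) (y : Z) : Z :=
  fold_right (fun x z => offset (fst x) - z) y w.

Lemma act_cons (x : letter) (w : word) (y : Z) :
  act (x :: w) y = offset (fst x) - act w y.
Proof. reflexivity. Qed.

Lemma act_app (u v : word) (y : Z) : act (u ++ v) y = act u (act v y).
Proof. apply fold_right_app. Qed.

Lemma act_affine (w : word) (y : Z) :
  act w y = act w 0 + (if Nat.even (length w) then y else - y).
Proof.
  induction w as [|x w IH]; [reflexivity|].
  cbn [length]. rewrite !act_cons, IH, Nat.even_succ, <- Nat.negb_even.
  destruct (Nat.even (length w)); cbn; lia.
Qed.

Lemma act_odd_involutive (w : word) (y : Z) :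
  Nat.odd (length w) = true -> act w (act w y) = y.
Proof.
  intro Hodd.
  rewrite <- Nat.negb_even in Hodd.
  rewrite (act_affine w (act w y)), (act_affine w y).
  destruct (Nat.even (length w)); [discriminate | lia].
Qed.

Lemma act_divide_diff (w : word) (y z : Z) :
  (3 | y - z) -> (3 | act w y - act w z).
Proof.
  intro H.
  induction w as [|x w IH]; [exact H|].
  rewrite !act_cons.
  replace (offset (fst x) - act w y - (offset (fst x) - act w z))
    with (- (act w y - act w z)) by lia.
  now apply Z.divide_opp_r.
Qed.

Lemma beq_act (u v : word) (y : Z) : beq u v -> (3 | act u y - act v y).
Proof.
  induction 1 as [w|u v _ IH|u v w _ IH1 _ IH2|u v x|u v].
  - rewrite Z.sub_diag. apply Z.divide_0_r.
  - replace (act v y - act u y) with (- (act u y - act v y)) by lia.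
    now apply Z.divide_opp_r.
  - replace (act u y - act w y) with ((act u y - act v y) + (act v y - act w y))
      by lia.
    now apply Z.divide_add_r.
  - rewrite !act_app. apply act_divide_diff.
    rewrite !act_cons. cbn [linv fst].
    exists 0. lia.
  - (* sigma1 sigma2 sigma1 acts as y |-> -1 - y and sigma2 sigma1 sigma2 as
       y |-> 2 - y: they only agree modulo 3. *)
    rewrite !act_app. apply act_divide_diff.
    rewrite !act_cons. cbn [fst offset].
    exists (-1). lia.
Qed.

Definition exp_letter (x : letter) : Z := if snd x then -1 else 1.

Definition exp_sum (w : word) : Z := fold_right (fun x e => exp_letter x + e) 0 w.

Lemma exp_sum_app (u v : word) : exp_sum (u ++ v) = exp_sum u + exp_sum v.
Proof. unfold exp_sum. induction u as [|x u IH]; cbn [app fold_right]; lia. Qed.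

Lemma exp_sum_cons (x : letter) (w : word) :
  exp_sum (x :: w) = exp_letter x + exp_sum w.
Proof. reflexivity. Qed.

Lemma beq_exp_sum (u v : word) : beq u v -> exp_sum u = exp_sum v.
Proof.
  induction 1 as [| | |u v [g b]|u v]; try congruence;
    rewrite !exp_sum_app, !exp_sum_cons; [destruct b|];
    cbn [exp_letter linv fst snd negb]; lia.
Qed.

Lemma odd_exp_sum (w : word) : Z.odd (exp_sum w) = Nat.odd (length w).
Proof.
  induction w as [|[g b] w IH]; [reflexivity|].
  cbn [length]. rewrite exp_sum_cons, Z.odd_add, IH, Nat.odd_succ, <- Nat.negb_odd.
  now destruct b.
Qed.

Lemma no_square_root_inv_sigma12 (a : word) :
  ~ beq (a ++ a) (winv (wmul sigma1 sigma2)).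
Proof.
  intro Hsq.
  assert (Hexp : exp_sum a = -1).
  { apply beq_exp_sum in Hsq. rewrite exp_sum_app in Hsq. cbn in Hsq. lia. }
  assert (Hodd : Nat.odd (length a) = true).
  { now rewrite <- odd_exp_sum, Hexp. }
  pose proof (beq_act _ _ 0 Hsq) as Hact.
  rewrite act_app, act_odd_involutive in Hact by exact Hodd.
  cbn in Hact.
  destruct Hact as [k Hk]. lia.
Qed.

Theorem mainTheorem3 :
  (* no a in B_3 with a^2 = (sigma1 sigma2)^{-1} *)
  (forall a : word,
      ~ beq (wmul a a) (winv (wmul sigma1 sigma2))) /\
  (* hat-beta = sigma1^{-1} hat-alpha sigma1 is not a braid:
     no b with (sigma1 b sigma1^{-1})^2 = (sigma1 sigma2)^{-1} *)
  (forall b : word,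
      ~ beq (wmul (wmul (wmul sigma1 b) (winv sigma1))
                  (wmul (wmul sigma1 b) (winv sigma1)))
            (winv (wmul sigma1 sigma2))) /\
  (* |hat-omega = hat-alpha sigma1 is not a braid:
     no c with (c sigma1^{-1})^2 = (sigma1 sigma2)^{-1} *)
  (forall c : word,
      ~ beq (wmul (wmul c (winv sigma1)) (wmul c (winv sigma1)))
            (winv (wmul sigma1 sigma2))) /\
  (* hat-omega| = sigma2 hat-alpha is not a braid:
     no d with (sigma2^{-1} d)^2 = (sigma1 sigma2)^{-1} *)
  (forall d : word,
      ~ beq (wmul (wmul (winv sigma2) d) (wmul (winv sigma2) d))
            (winv (wmul sigma1 sigma2))).
Proof.
  repeat split; intros; apply no_square_root_inv_sigma12.
Qed.
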